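(* Let $R$ be a commutative Noetherian ring of prime characteristic $p$ and $G$ an $x$-torsion-free left $R[x,f]$-module. Then there is an order-reversing bijection $\Delta:\mathcal{A}(G)\to\mathcal{I}(G)$ given by $\Delta(N)=(\operatorname{grann}_{R[x,f]}N)\cap R=(0:_RN)$, whose inverse (also order-reversing) is $\mathfrak{b}\mapsto\operatorname{ann}_G(\mathfrak{b}R[x,f])$.
   Context: $R[x,f]$ is the Frobenius skew polynomial ring: free left $R$-module on $(x^i)_{i\ge0}$, $xr=r^px$; $\mathfrak{b}R[x,f]=\bigoplus_n\mathfrak{b}x^n$. $x$-torsion-free: $xg=0\Rightarrow g=0$. Graded two-sided ideals of $R[x,f]$ are $\bigoplus_n\mathfrak{b}_nx^n$ with $(\mathfrak{b}_n)$ ascending chains of ideals. $\operatorname{ann}_G\mathfrak{B}=\{g:\theta g=0\ \forall\theta\in\mathfrak{B}\}$; $\mathcal{A}(G)$ is the set of special annihilator submodules, i.e. those of the form $\operatorname{ann}_G\mathfrak{B}$ with $\mathfrak{B}$ a graded two-sided ideal. $\operatorname{grann}_{R[x,f]}N$ is the set of $\sum r_ix^i$ with each $r_ix^i$ annihilating $N$. $\mathcal{I}(G)$ is the set of ideals $\mathfrak{b}$ of $R$ for which there is an $R[x,f]$-submodule $N$ of $G$ with $\operatorname{grann}_{R[x,f]}N=\mathfrak{b}R[x,f]$. *)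

From HB Require Import structures.
From mathcomp Require Import all_boot all_order all_algebra.
Set Implicit Arguments. Unset Strict Implicit. Unset Printing Implicit Defensive.
Import GRing.Theory.
Local Open Scope ring_scope.

Definition psubset {T : Type} (A B : T -> Prop) : Prop := forall t, A t -> B t.

Definition is_ideal (R : comNzRingType) (I : R -> Prop) : Prop :=
  I 0 /\ (forall a b, I a -> I b -> I (a + b)) /\ (forall r a, I a -> I (r * a)).

Definition noetherian (R : comNzRingType) : Prop :=
  forall I : nat -> R -> Prop, (forall n, is_ideal (I n)) ->
    (forall n, psubset (I n) (I n.+1)) ->
    exists N, forall n, (N <= n)%N -> psubset (I n) (I N).

(* A left R[x,f]-module (f = Frobenius r |-> r^p) is an R-module G together
   with an additive map xG (the action of x) such that x (r g) = r^p (x g). *)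
Definition frob_module (R : comNzRingType) (p : nat) (G : lmodType R)
  (xG : G -> G) : Prop :=
  (forall g h, xG (g + h) = xG g + xG h) /\
  (forall (r : R) g, xG (r *: g) = r ^+ p *: xG g).

Definition x_torsion_free (R : comNzRingType) (G : lmodType R) (xG : G -> G) :=
  forall g, xG g = 0 -> g = 0.

(* Elements of R[x,f] are represented by coefficient sequences s,
   standing for \sum_i s`_i x^i; their action on G: *)
Definition rxf_act (R : comNzRingType) (G : lmodType R) (xG : G -> G)
  (s : seq R) (g : G) : G :=
  \sum_(i < size s) s`_i *: iter i xG g.

Definition is_rxf_submod (R : comNzRingType) (G : lmodType R) (xG : G -> G)
  (N : G -> Prop) : Prop :=
  N 0 /\ (forall g h, N g -> N h -> N (g + h)) /\
  (forall (r : R) g, N g -> N (r *: g)) /\ (forall g, N g -> N (xG g)).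

(* Graded two-sided ideal  (+)_n b_n x^n, (b_n) an ascending chain of ideals. *)
Definition graded_ideal_family (R : comNzRingType) (b : nat -> R -> Prop) :=
  (forall n, is_ideal (b n)) /\ (forall n, psubset (b n) (b n.+1)).

Definition graded_elts (R : comNzRingType) (b : nat -> R -> Prop)
  (s : seq R) : Prop := forall i, b i s`_i.

Definition ext_ideal (R : comNzRingType) (b : R -> Prop) : seq R -> Prop :=
  graded_elts (fun _ => b).

Definition annG (R : comNzRingType) (G : lmodType R) (xG : G -> G)
  (B : seq R -> Prop) : G -> Prop :=
  fun g => forall th, B th -> rxf_act xG th g = 0.

(* grann_{R[x,f]} N : each homogeneous component r_i x^i annihilates N *)
Definition grann (R : comNzRingType) (G : lmodType R) (xG : G -> G)
  (N : G -> Prop) : seq R -> Prop :=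
  fun s => forall i n, N n -> s`_i *: iter i xG n = 0.

Definition annR (R : comNzRingType) (G : lmodType R) (N : G -> Prop) : R -> Prop :=
  fun r => forall n, N n -> r *: n = 0.

Definition in_specA (R : comNzRingType) (G : lmodType R) (xG : G -> G)
  (N : G -> Prop) : Prop :=
  exists b, graded_ideal_family b /\
    forall g, N g <-> annG xG (graded_elts b) g.

Definition in_specI (R : comNzRingType) (G : lmodType R) (xG : G -> G)
  (b : R -> Prop) : Prop :=
  is_ideal b /\ exists N, is_rxf_submod xG N /\
    forall s, grann xG N s <-> ext_ideal b s.

From mathcomp Require Import all_boot all_order all_algebra.
Set Implicit Arguments. Unset Strict Implicit.
Import GRing.Theory.
Local Open Scope ring_scope.

(* Since x r = r^p x, for n in an x-stable submodule N we get
   x^i (r n) = r^(p^i - 1) (r x^i n); hence, when G is x-torsion-free,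
   r x^i annihilates N exactly when r does.  So the graded annihilator of an
   R[x,f]-submodule N is (0 :_R N) R[x,f], and dually a special annihilator
   submodule ann_G(+)_i b_i x^i is already cut out by (0 :_R N) R[x,f]. *)

Section Annihilators.

Variables (R : comNzRingType) (G : lmodType R) (xG : G -> G).

Definition grann_deg (N : G -> Prop) (i : nat) (r : R) : Prop :=
  forall n, N n -> r *: iter i xG n = 0.

Lemma annR_ideal (N : G -> Prop) : is_ideal (annR N).
Proof.
split; first by move=> n _; rewrite scale0r.
split; first by move=> a b ha hb n Nn; rewrite scalerDl ha // hb // addr0.
by move=> r a ha n Nn; rewrite -scalerA ha // scaler0.
Qed.

Lemma annR_antitone (N1 N2 : G -> Prop) :
  psubset N1 N2 -> psubset (annR N2) (annR N1).
Proof. by move=> sN r hr n /sN; apply: hr. Qed.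

Lemma annG_ext_antitone (b1 b2 : R -> Prop) :
  psubset b1 b2 -> psubset (annG xG (ext_ideal b2)) (annG xG (ext_ideal b1)).
Proof. by move=> sb g hg th hth; apply: hg => i; apply/sb/hth. Qed.

Lemma grann_const (N : G -> Prop) (r : R) : grann xG N [:: r] <-> annR N r.
Proof.
split=> [h n Nn | h [|i] n Nn /=]; [exact: h 0%N n Nn | exact: h |].
by rewrite nth_nil scale0r.
Qed.

Lemma annG_grann (N : G -> Prop) n : N n -> annG xG (grann xG N) n.
Proof. by move=> Nn th hth; rewrite /rxf_act big1 // => i _; apply: hth. Qed.

Lemma annG_gradedE (b : nat -> R -> Prop) g : (forall i, b i 0) ->
  annG xG (graded_elts b) g <-> forall i r, b i r -> r *: iter i xG g = 0.
Proof.
move=> b0; split=> [h i r bir | h th hth]; last first.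
  by rewrite /rxf_act big1 // => j _; apply: h.
have monomial : graded_elts b (rcons (nseq i 0) r).
  move=> j; rewrite nth_rcons size_nseq nth_nseq if_same.
  by case: ltnP => // _; case: eqP => [->|].
move: (h _ monomial); rewrite /rxf_act size_rcons size_nseq big_ord_recr /=.
rewrite big1 ?add0r; first by rewrite nth_rcons size_nseq ltnn eqxx.
by move=> j _; rewrite nth_rcons size_nseq ltn_ord nth_nseq ltn_ord scale0r.
Qed.

Lemma ext_ideal_in_specA (b : R -> Prop) :
  is_ideal b -> in_specA xG (annG xG (ext_ideal b)).
Proof. by move=> bI; exists (fun=> b); split; [split=> // n | move=> g]. Qed.

Lemma iter_submod (N : G -> Prop) :
  is_rxf_submod xG N -> forall i n, N n -> N (iter i xG n).
Proof. by move=> [_ [_ [_ Nx]]] i n Nn; elim: i => //= i; apply: Nx. Qed.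

Lemma iter_tf_eq0 : x_torsion_free xG -> forall i g, iter i xG g = 0 -> g = 0.
Proof. by move=> tf; elim=> //= i IH g /tf /IH. Qed.

Section Frobenius.

Variable p : nat.
Hypothesis frobG : frob_module p xG.

Lemma iter_frobD i g h : iter i xG (g + h) = iter i xG g + iter i xG h.
Proof. by case: frobG => xD _; elim: i => //= i ->; rewrite xD. Qed.

Lemma iter_frob0 i : iter i xG 0 = 0.
Proof. by apply/(addrI (iter i xG 0)); rewrite -iter_frobD !addr0. Qed.

Lemma iter_frobZ i (r : R) g : iter i xG (r *: g) = r ^+ (p ^ i) *: iter i xG g.
Proof.
case: frobG => _ xZ; elim: i => [|i IH] /=; first by rewrite expn0 expr1.
by rewrite IH xZ -exprM expnS mulnC.
Qed.

Lemma specA_submod (N : G -> Prop) : in_specA xG N -> is_rxf_submod xG N.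
Proof.
move=> [b [[bI bS] hN]].
have b0 i : b i 0 by case: (bI i).
have NE g : N g <-> forall i r, b i r -> r *: iter i xG g = 0.
  by split=> [/hN/(annG_gradedE _ b0) | /(annG_gradedE _ b0)/hN].
split; first by apply/NE => i r _; rewrite iter_frob0 scaler0.
split; first by move=> g h /NE hg /NE hh; apply/NE => i r bir;
  rewrite iter_frobD scalerDr hg // hh // addr0.
split; first by move=> s g /NE hg; apply/NE => i r bir;
  rewrite iter_frobZ scalerA mulrC -scalerA hg // scaler0.
by move=> g /NE hg; apply/NE => i r bir; rewrite -iterSr; apply/hg/bS.
Qed.

Hypotheses (p_gt0 : (0 < p)%N) (tfG : x_torsion_free xG).

Lemma grann_degE (N : G -> Prop) i r :
  is_rxf_submod xG N -> grann_deg N i r <-> annR N r.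
Proof.
move=> NS; split=> [h n Nn | h n Nn]; last exact: h _ (iter_submod NS i Nn).
apply: (iter_tf_eq0 tfG (i := i)).
have pi_gt0 : (0 < p ^ i)%N by rewrite expn_gt0 p_gt0.
by rewrite iter_frobZ -(prednK pi_gt0) exprSr -scalerA h // scaler0.
Qed.

Lemma grannE (N : G -> Prop) s :
  is_rxf_submod xG N -> grann xG N s <-> ext_ideal (annR N) s.
Proof.
move=> NS; split=> h i; first exact: (grann_degE i _ NS).1 (h i).
exact: (grann_degE i _ NS).2 (h i).
Qed.

Lemma annG_ext_annR (N : G -> Prop) :
  in_specA xG N -> forall g, annG xG (ext_ideal (annR N)) g <-> N g.
Proof.
move=> NA g; have NS := specA_submod NA; case: NA => [b [[bI _] hN]].
have b0 i : b i 0 by case: (bI i).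
have annR0 (i : nat) : annR N 0 by case: (annR_ideal N).
split=> [/(annG_gradedE _ annR0) h | Ng]; last first.
  by apply/(annG_gradedE _ annR0) => i r hr; apply: hr (iter_submod NS i Ng).
apply/hN/(annG_gradedE _ b0) => i r bir; apply: h; apply/(grann_degE i _ NS).
by move=> n /hN /(annG_gradedE _ b0) /(_ i r bir).
Qed.

End Frobenius.

Lemma annR_annG_ext (b : R -> Prop) :
  in_specI xG b -> forall r, annR (annG xG (ext_ideal b)) r <-> b r.
Proof.
move=> [bI [N [_ hN]]] r; split=> [h | br g /(annG_gradedE _ (fun=> bI.1)) hg].
  have /hN /(_ 0%N) // : grann xG N [:: r].
  by apply/grann_const => n /annG_grann Nn; apply: h => th /hN; apply: Nn.
exact: (hg 0%N).
Qed.

End Annihilators.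

Theorem proposition1p11 (R : comNzRingType) (p : nat) (G : lmodType R)
  (xG : G -> G) :
  noetherian R -> p \in [pchar R] -> frob_module p xG -> x_torsion_free xG ->
  (* Delta maps A(G) into I(G), and Delta(N) = grann N \cap R = (0 :_R N) *)
  (forall N, in_specA xG N ->
     in_specI xG (annR N) /\
     (forall r : R, grann xG N [:: r] <-> annR N r)) /\
  (* the inverse map b |-> ann_G(bR[x,f]) maps I(G) into A(G) *)
  (forall b, in_specI xG b -> in_specA xG (annG xG (ext_ideal b))) /\
  (* the two maps are mutually inverse *)
  (forall N, in_specA xG N ->
     forall g, annG xG (ext_ideal (annR N)) g <-> N g) /\
  (forall b, in_specI xG b ->
     forall r, annR (annG xG (ext_ideal b)) r <-> b r) /\
  (* both are order-reversing *)
  (forall N1 N2, in_specA xG N1 -> in_specA xG N2 ->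
     (psubset N1 N2 <-> psubset (annR N2) (annR N1))) /\
  (forall b1 b2, in_specI xG b1 -> in_specI xG b2 ->
     (psubset b1 b2 <->
      psubset (annG xG (ext_ideal b2)) (annG xG (ext_ideal b1)))).
Proof.
move=> _ pcharRp frobG tfG.
have p_gt0 : (0 < p)%N := prime_gt0 (pcharf_prime pcharRp).
have DeltaK := annG_ext_annR frobG p_gt0 tfG.
have NablaK := @annR_annG_ext R G xG.
split.
  move=> N NA; have NS := specA_submod frobG NA.
  split; last exact: grann_const.
  split; first exact: annR_ideal.
  by exists N; split=> // s; apply: (grannE frobG p_gt0 tfG).
split; first by move=> b [bI _]; apply: ext_ideal_in_specA.
split; first exact: DeltaK.
split; first exact: NablaK.
split=> [N1 N2 N1A N2A | b1 b2 b1I b2I]; split; [exact: annR_antitone | | |].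
- move=> sR g /(DeltaK _ N1A) hg; apply/(DeltaK _ N2A).
  exact: annG_ext_antitone hg.
- exact: annG_ext_antitone.
- move=> sG r /(NablaK _ b1I) hr; apply/(NablaK _ b2I).
  exact: annR_antitone hr.
Qed.
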